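(* Let $n\ge1$ and $1\le m\le n$. Suppose $A=(a_{ij})$ is an $n\times n$ $(m,\epsilon_A)$-matrix and set $K_A=\max_{i,j\le n,\,k\le m} a_{ij}/a_{kk}$. If $A'$ is an $n\times n$ $(m,\epsilon_{A'})$-matrix, then $AA'$ is an $(m,\epsilon_{AA'})$-matrix with $\epsilon_{AA'}=\epsilon_A+nK_A\epsilon_{A'}$.
   Context: For $\epsilon>0$ and $1\le m\le n$, an $n\times n$ nonnegative matrix $A=(a_{ij})$ with positive diagonal entries is an $(m,\epsilon)$-matrix if $a_{ij}/a_{jj}<\epsilon$ for all $j\le m$ and $i\neq j$. *)

From mathcomp Require Import all_boot all_order all_algebra.
Set Implicit Arguments. Unset Strict Implicit. Unset Printing Implicit Defensive.
Import Order.TTheory GRing.Theory Num.Theory.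
Local Open Scope ring_scope.

(* Indices are 0-based: the paper's indices 1..n are 'I_n, and "j <= m"
   (1-based) becomes "j < m" (0-based). *)

Definition meps_matrix (R : realFieldType) (n m : nat) (eps : R)
    (A : 'M[R]_n) : Prop :=
  [/\ 0 < eps,
      (forall i j : 'I_n, 0 <= A i j),
      (forall i : 'I_n, 0 < A i i) &
      (forall i j : 'I_n, (j < m)%N -> i != j -> A i j / A j j < eps)].

(* The ratios are all >= 0 for a
   nonnegative matrix with positive diagonal, and the range is nonempty
   when m >= 1, so using 0 as the neutral element of max is harmless. *)
Definition KA (R : realFieldType) (n m : nat) (A : 'M[R]_n) : R :=
  \big[Num.max/0]_(i < n) \big[Num.max/0]_(j < n)
     \big[Num.max/0]_(k < n | (k < m)%N) (A i j / A k k).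

From mathcomp Require Import all_boot all_order all_algebra.
Set Implicit Arguments. Unset Strict Implicit. Unset Printing Implicit Defensive.
Import Order.TTheory GRing.Theory Num.Theory.
Local Open Scope ring_scope.

(* Split (A A')_ij = a_ij a'_jj + sum_(k != j) a_ik a'_kj.  The first term is
   below eps_A a_jj a'_jj; each of the at most n remaining terms is below
   (K_A a_jj) (eps_A' a'_jj).  Both bounds are absorbed by the diagonal term
   a_jj a'_jj <= (A A')_jj of the nonnegative product. *)

Section KA.
Variables (R : realFieldType) (n m : nat) (A : 'M[R]_n).

Lemma KA_ge0 : 0 <= KA m A.
Proof. exact: bigmax_ge_id. Qed.

Lemma le_KA (i j k : 'I_n) : (k < m)%N -> A i j / A k k <= KA m A.
Proof.
move=> km; apply: le_trans (le_bigmax _ _ i).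
apply: le_trans (le_bigmax _ _ j).
exact: (le_bigmax_cond _ (fun k : 'I_n => A i j / A k k) km).
Qed.

Lemma le_KA_mul (i j k : 'I_n) :
  (k < m)%N -> 0 < A k k -> A i j <= KA m A * A k k.
Proof. by move=> km Akk; rewrite -ler_pdivrMr //; apply: le_KA. Qed.

End KA.

Section NonnegProduct.
Variables (R : numDomainType) (n : nat) (A B : 'M[R]_n).
Hypotheses (A_ge0 : forall i j, 0 <= A i j) (B_ge0 : forall i j, 0 <= B i j).

Lemma mulmx_ge0 i j : 0 <= (A *m B) i j.
Proof. by rewrite mxE sumr_ge0 // => k _; apply: mulr_ge0. Qed.

Lemma mulmx_diag_ge j : A j j * B j j <= (A *m B) j j.
Proof.
by rewrite mxE (bigD1 j) //= lerDl sumr_ge0 // => k _; apply: mulr_ge0.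
Qed.

Lemma mulmx_diag_gt0 j : 0 < A j j -> 0 < B j j -> 0 < (A *m B) j j.
Proof.
by move=> Ajj Bjj; apply: lt_le_trans (mulmx_diag_ge j); apply: mulr_gt0.
Qed.

End NonnegProduct.

Lemma ler_sum_ord_const (R : numDomainType) (n : nat) (P : pred 'I_n)
    (F : 'I_n -> R) (c : R) :
  0 <= c -> (forall k, P k -> F k <= c) -> \sum_(k < n | P k) F k <= n%:R * c.
Proof.
move=> c0 Fc; apply: le_trans (_ : \sum_(k < n | P k) c <= _).
  exact: ler_sum.
apply: le_trans (_ : \sum_(k < n) c <= _).
  by rewrite [X in _ <= X](bigID P) /= lerDl sumr_ge0.
by rewrite sumr_const card_ord mulr_natl.
Qed.

Section MepsProduct.
Variables (R : realFieldType) (n m : nat) (epsA epsB : R) (A B : 'M[R]_n).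
Hypotheses (hA : meps_matrix m epsA A) (hB : meps_matrix m epsB B).

Lemma meps_mulmx_diag_term (i j : 'I_n) :
  (j < m)%N -> i != j -> A i j * B j j < epsA * (A *m B) j j.
Proof.
case: hA hB => eA_gt0 A_ge0 Ad_gt0 A_ratio [_ B_ge0 Bd_gt0 _] jm ij.
apply: lt_le_trans (_ : epsA * (A j j * B j j) <= _).
  by rewrite mulrA (ltr_pM2r (Bd_gt0 j)) -ltr_pdivrMr ?A_ratio.
by rewrite ler_pM2l // mulmx_diag_ge.
Qed.

Lemma meps_mulmx_offdiag_sum (i j : 'I_n) : (j < m)%N ->
  \sum_(k < n | k != j) A i k * B k j <= n%:R * KA m A * epsB * (A *m B) j j.
Proof.
case: hA hB => _ A_ge0 Ad_gt0 _ [eB_gt0 B_ge0 Bd_gt0 B_ratio] jm.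
have KeB_ge0 : 0 <= KA m A * epsB by rewrite mulr_ge0 ?KA_ge0 ?ltW.
have diag_le := mulmx_diag_ge A_ge0 B_ge0 j.
apply: (le_trans (_ : _ <= n%:R * (KA m A * epsB * (A *m B) j j)));
  last by rewrite !mulrA.
apply: ler_sum_ord_const => [|k kj].
  by rewrite mulr_ge0 // (le_trans _ diag_le) // mulr_ge0 ?ltW.
apply: le_trans (_ : KA m A * epsB * (A j j * B j j) <= _); last first.
  exact: ler_wpM2l.
rewrite mulrACA ler_pM ?A_ge0 ?B_ge0 ?le_KA_mul //.
by rewrite ltW // -ltr_pdivrMr ?B_ratio.
Qed.

End MepsProduct.

Theorem lemma2p2 (R : realFieldType) (n m : nat) (epsA epsA' : R)
    (A A' : 'M[R]_n) :
  (1 <= n)%N -> (1 <= m)%N -> (m <= n)%N ->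
  meps_matrix m epsA A -> meps_matrix m epsA' A' ->
  meps_matrix m (epsA + n%:R * KA m A * epsA') (A *m A').
Proof.
move=> _ _ _ hA hA'.
case: (hA) (hA') => eA_gt0 A_ge0 Ad_gt0 _ [eA'_gt0 A'_ge0 A'd_gt0 _].
split=> [||i|i j jm ij].
- by rewrite ltr_wpDr // !mulr_ge0 ?ler0n ?KA_ge0 ?ltW.
- exact: mulmx_ge0.
- exact: mulmx_diag_gt0.
rewrite ltr_pdivrMr ?mulmx_diag_gt0 // mxE (bigD1 j) //= mulrDl.
apply: ltr_leD.
- exact: meps_mulmx_diag_term hA hA' i j jm ij.
- exact: meps_mulmx_offdiag_sum hA hA' i j jm.
Qed.
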